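(* Let $\mathcal{G}_{55}$ be the network described in the context, with nodes $(i,j)$, $1\le i,j\le 5$. Define $5\times5$ $0/1$ matrices $M_1=I_5$, $M_2$ with ones exactly at positions $(1,2),(2,3),(3,4),(4,5),(5,1)$, $M_3$ with ones exactly at $(1,3),(2,5),(3,2),(4,1),(5,4)$, $M_4$ with ones exactly at $(1,4),(2,1),(3,5),(4,3),(5,2)$, $M_5$ with ones exactly at $(1,5),(2,4),(3,1),(4,2),(5,3)$. Let $K$ be the 5-coloring of the nodes in which node $(i,j)$ has color $k$ iff $(M_k)_{ij}=1$. Then $K$ is balanced, but $K$ is not an orbit coloring, i.e. there is no subgroup $\Sigma\subseteq\mathbb{S}_5\times\mathbb{S}_5$ whose orbits on the nodes are exactly the color classes of $K$.
   Context: For integers $m,n\ge1$, the network $\mathcal{G}_{mn}$ has node set $\{(i,j):1\le i\le m,\ 1\le j\le n\}$ ($i$ indexes rows, $j$ columns), all nodes of the same type. For each ordered pair of distinct nodes $(c,d)$ there is exactly one arrow with head $c$ and tail $d$, whose type is: ''row'' if $c,d$ lie in the same row, ''column'' if they lie in the same column, ''diagonal'' otherwise; in addition each node has an internal arrow from itself to itself (a fourth type). The group $\mathbb{S}_m\times\mathbb{S}_n$ acts on the nodes by $(\sigma,\tau)\cdot(i,j)=(\sigma(i),\tau(j))$; it is the symmetry group of $\mathcal{G}_{mn}$. A coloring is a map from nodes to a set of colors (identified up to the partition it induces). A coloring is balanced if whenever nodes $c,d$ have the same color, for every arrow type and every color $k$ the number of input arrows of that type to $c$ with tail of color $k$ equals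 the corresponding number for $d$. For a subgroup $\Sigma$ of the symmetry group, the orbit coloring of $\Sigma$ has as color classes the $\Sigma$-orbits on nodes; a coloring is an orbit coloring if it is the orbit coloring of some such subgroup. *)

From HB Require Import structures.
From mathcomp Require Import all_boot all_order all_algebra all_fingroup.
Set Implicit Arguments. Unset Strict Implicit. Unset Printing Implicit Defensive.

(* Nodes of G_{mn}: pairs (i,j) with i : 'I_m (row), j : 'I_n (column);
   0-based indices, so ordinal i corresponds to the paper's row i+1. *)
Definition node (m n : nat) := ('I_m * 'I_n)%type.

Inductive arrow_type := Row | Column | Diagonal | Internal.

Definition arrow_type_eqb (a b : arrow_type) : bool :=
  match a, b with
  | Row, Row | Column, Column | Diagonal, Diagonal | Internal, Internal => true
  | _, _ => false
  end.
Lemma arrow_type_eqP : Equality.axiom arrow_type_eqb.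
Proof. by case; case; constructor. Qed.
HB.instance Definition _ := hasDecEq.Build arrow_type arrow_type_eqP.

(* Type of the unique arrow with head c and tail d (internal arrow if c = d). *)
Definition atype m n (c d : node m n) : arrow_type :=
  if c == d then Internal
  else if c.1 == d.1 then Row
  else if c.2 == d.2 then Column
  else Diagonal.

Definition in_count m n (C : eqType) (col : node m n -> C)
    (c : node m n) (t : arrow_type) (k : C) : nat :=
  #|[pred d : node m n | (atype c d == t) && (col d == k)]|.

Definition balanced m n (C : eqType) (col : node m n -> C) : Prop :=
  forall c d : node m n, col c = col d ->
    forall (t : arrow_type) (k : C), in_count col c t k = in_count col d t k.

Definition sym_act m n (s : {perm 'I_m} * {perm 'I_n}) (x : node m n) : node m n :=
  (s.1 x.1, s.2 x.2).

Definition is_orbit_coloring_of m n (C : eqType) (col : node m n -> C)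
    (Sigma : {group ({perm 'I_m} * {perm 'I_n})}) : Prop :=
  forall x y : node m n, col x = col y <-> exists2 s, s \in Sigma & sym_act s x = y.

Definition is_orbit_coloring m n (C : eqType) (col : node m n -> C) : Prop :=
  exists Sigma : {group ({perm 'I_m} * {perm 'I_n})}, is_orbit_coloring_of col Sigma.

(* Positions (1-based, (row, column)) of the ones of M_1, ..., M_5. *)
Definition ones_of (k : nat) : seq (nat * nat) :=
  match k with
  | 1 => [:: (1,1); (2,2); (3,3); (4,4); (5,5)]
  | 2 => [:: (1,2); (2,3); (3,4); (4,5); (5,1)]
  | 3 => [:: (1,3); (2,5); (3,2); (4,1); (5,4)]
  | 4 => [:: (1,4); (2,1); (3,5); (4,3); (5,2)]
  | 5 => [:: (1,5); (2,4); (3,1); (4,2); (5,3)]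
  | _ => [::]
  end.

(* M k for k : 'I_5 is the paper's M_{k+1}, a 5x5 0/1 matrix. *)
Definition M (k : 'I_5) : 'M[nat]_5 :=
  \matrix_(i < 5, j < 5) (nat_of_bool ((i.+1, j.+1) \in ones_of k.+1)).

Definition K (x : node 5 5) : option 'I_5 := [pick k : 'I_5 | M k x.1 x.2 == 1%N].

(* The five matrices are the color classes of a Latin square:
   every color occurs exactly once in every row and every column.  For such a
   coloring the number of [t]-arrows from color [k] into a node [c] depends
   only on whether [c] itself has color [k], so the coloring is balanced.
   It is not an orbit coloring: a color-preserving symmetry [(f, g)] sending
   node (1,1) to node (2,2) must, by the Latin property, respect the
   diagonals of [M_1] and [M_2], which forces [f = g = (i |-> i + 1)]; but
   this shift does not preserve the color classes of [M_3]. *)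

From mathcomp Require Import all_boot all_order all_algebra all_fingroup.

Set Implicit Arguments.
Unset Strict Implicit.
Unset Printing Implicit Defensive.

Lemma card_sum (T : finType) (P : pred T) : #|P| = \sum_x P x.
Proof.
by rewrite -sum1_card big_mkcond; apply: eq_bigr => x _; rewrite unfold_in; case: (P x).
Qed.

Section Counting.

Variables (m n : nat) (C : eqType) (col : node m n -> C).

Definition row_count (i : 'I_m) (k : C) : nat := #|[pred j | col (i, j) == k]|.
Definition column_count (j : 'I_n) (k : C) : nat := #|[pred i | col (i, j) == k]|.
Definition color_count (k : C) : nat := #|[pred d | col d == k]|.

Definition equitable : Prop :=
  (forall i i' k, row_count i k = row_count i' k) /\
  (forall j j' k, column_count j k = column_count j' k).

Lemma in_countE c t k :
  in_count col c t k = \sum_d ((atype c d == t) && (col d == k)).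
Proof. exact: card_sum. Qed.

Lemma row_countE i k : row_count i k = \sum_d ((d.1 == i) && (col d == k)).
Proof.
rewrite (eq_bigr (fun d => ((d.1 == i) && (col (d.1, d.2) == k) : nat))) => [|[] //].
rewrite -(pair_bigA _ (fun i' j => ((i' == i) && (col (i', j) == k) : nat))) /=.
rewrite (bigD1 i) //= [X in _ + X]big1 ?addn0 => [|i' /negbTE i'i].
  by rewrite /row_count card_sum; apply: eq_bigr => j _; rewrite eqxx.
by rewrite big1 // => j; rewrite i'i.
Qed.

Lemma column_countE j k : column_count j k = \sum_d ((d.2 == j) && (col d == k)).
Proof.
rewrite (eq_bigr (fun d => ((d.2 == j) && (col (d.1, d.2) == k) : nat))) => [|[] //].
rewrite -(pair_bigA _ (fun i j' => ((j' == j) && (col (i, j') == k) : nat))) /=.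
rewrite exchange_big (bigD1 j) //= [X in _ + X]big1 ?addn0 => [|j' /negbTE j'j].
  by rewrite /column_count card_sum; apply: eq_bigr => i _; rewrite eqxx.
by rewrite big1 // => i; rewrite j'j.
Qed.

Lemma atypeE (c d : node m n) : atype c d =
  if c.1 == d.1 then (if c.2 == d.2 then Internal else Row)
  else if c.2 == d.2 then Column else Diagonal.
Proof.
case: c d => [i j] [i' j']; rewrite /atype xpair_eqE /=.
by case: (i == i'); case: (j == j').
Qed.

Lemma in_count_Internal c k : in_count col c Internal k = (col c == k).
Proof.
rewrite in_countE (bigD1 c) //= big1 => [|d /negbTE d_c].
  by rewrite /atype eqxx addn0.
by rewrite /atype (eq_sym c) d_c; case: (c.1 == d.1); case: (c.2 == d.2).
Qed.

Lemma in_count_Row_Internal c k :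
  in_count col c Row k + in_count col c Internal k = row_count c.1 k.
Proof.
rewrite !in_countE row_countE -big_split; apply: eq_bigr => d _.
rewrite atypeE (eq_sym d.1).
by case: (c.1 == d.1); case: (c.2 == d.2); case: (col d == k).
Qed.

Lemma in_count_Column_Internal c k :
  in_count col c Column k + in_count col c Internal k = column_count c.2 k.
Proof.
rewrite !in_countE column_countE -big_split; apply: eq_bigr => d _.
rewrite atypeE (eq_sym d.2).
by case: (c.1 == d.1); case: (c.2 == d.2); case: (col d == k).
Qed.

Lemma in_count_Diagonal c k :
  in_count col c Diagonal k + row_count c.1 k + column_count c.2 k =
  color_count k + in_count col c Internal k.
Proof.
rewrite !in_countE row_countE column_countE /color_count card_sum -!big_split.
apply: eq_bigr => d _.
rewrite /= atypeE (eq_sym d.1) (eq_sym d.2).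
by case: (c.1 == d.1); case: (c.2 == d.2); case: (col d == k).
Qed.

Theorem equitable_balanced : equitable -> balanced col.
Proof.
move=> [rowE colE] c d cd t k.
have sameI : in_count col c Internal k = in_count col d Internal k.
  by rewrite !in_count_Internal cd.
case: t => //.
- apply: (@addIn (in_count col c Internal k)).
  by rewrite {2}sameI !in_count_Row_Internal (rowE c.1 d.1).
- apply: (@addIn (in_count col c Internal k)).
  by rewrite {2}sameI !in_count_Column_Internal (colE c.2 d.2).
- apply: (@addIn (row_count c.1 k + column_count c.2 k)).
  rewrite addnA in_count_Diagonal (rowE c.1 d.1) (colE c.2 d.2).
  by rewrite addnA in_count_Diagonal sameI.
Qed.

End Counting.

Definition latin_square n (L : 'I_n -> 'I_n -> 'I_n) : Prop :=
  (forall i, injective (L i)) /\ (forall j, injective (fun i => L i j)).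

Lemma latin_square_equitable n (L : 'I_n -> 'I_n -> 'I_n) (C : eqType)
    (h : 'I_n -> C) (col : node n n -> C) :
  latin_square L -> (forall x, col x = h (L x.1 x.2)) -> equitable col.
Proof.
move=> [rowL colL] colE; split=> [i i' k | j j' k].
- suff rowE i0 : row_count col i0 k = #|[pred l | h l == k]| by rewrite !rowE.
  rewrite /row_count !card_sum [RHS](reindex_inj (rowL i0)).
  by apply: eq_bigr => j _ /=; rewrite colE.
- suff colE' j0 : column_count col j0 k = #|[pred l | h l == k]| by rewrite !colE'.
  rewrite /column_count !card_sum [RHS](reindex_inj (colL j0)).
  by apply: eq_bigr => i _ /=; rewrite colE.
Qed.

Definition color_preserving m n (C : eqType) (col : node m n -> C)
    (s : {perm 'I_m} * {perm 'I_n}) : Prop :=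
  forall x, col (sym_act s x) = col x.

Lemma orbit_coloring_transitive m n (C : eqType) (col : node m n -> C) x y :
  is_orbit_coloring col -> col x = col y ->
  exists2 s, color_preserving col s & sym_act s x = y.
Proof.
move=> [Sigma orbitE] /orbitE [s Ss sxy]; exists s => // z.
by symmetry; apply/orbitE; exists s.
Qed.

Definition latin5_table : seq (seq nat) :=
  [:: [:: 0; 1; 2; 3; 4];
      [:: 3; 0; 1; 4; 2];
      [:: 4; 2; 0; 1; 3];
      [:: 2; 4; 3; 0; 1];
      [:: 1; 3; 4; 2; 0]].

Definition latin5 (i j : 'I_5) : 'I_5 := inZp (nth 0 (nth [::] latin5_table i) j).

Local Notation ord5 k := (@Ordinal 5 k isT).

Ltac case_ord5 i := case: i => [[|[|[|[|[|?]]]]] ?] //.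

Lemma M_latin5 k i j : M k i j = (latin5 i j == k).
Proof. by rewrite mxE; case_ord5 k; case_ord5 i; case_ord5 j. Qed.

Lemma K_latin5 x : K x = Some (latin5 x.1 x.2).
Proof.
rewrite /K; case: pickP => [k | /(_ (latin5 x.1 x.2))]; rewrite /= M_latin5 ?eqxx //.
by case: (latin5 x.1 x.2 =P k) => [-> |].
Qed.

Lemma latin5_latin_square : latin_square latin5.
Proof.
split=> [i j j' | j i i'] /eqP; apply: contraTeq.
- by case_ord5 i; case_ord5 j; case_ord5 j'.
- by case_ord5 j; case_ord5 i; case_ord5 i'.
Qed.

Lemma latin5_no_shift_symmetry (f g : 'I_5 -> 'I_5) :
  (forall i j, latin5 (f i) (g j) = latin5 i j) ->
  f (ord5 0) = ord5 1 -> g (ord5 0) = ord5 1 -> False.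
Proof.
move=> pres f0 g0; have [row_inj col_inj] := latin5_latin_square.
have g1 : g (ord5 1) = ord5 2.
  by apply: (row_inj (ord5 1)); rewrite -{1}f0 pres.
have f1 : f (ord5 1) = ord5 2.
  by apply: (col_inj (ord5 2)); rewrite /= -{1}g1 pres.
have g2 : g (ord5 2) = ord5 3.
  by apply: (row_inj (ord5 2)); rewrite -{1}f1 pres.
by have := pres (ord5 0) (ord5 2); rewrite f0 g2 => /eqP.
Qed.

Theorem mainTheorem2 : balanced K /\ ~ is_orbit_coloring K.
Proof.
split.
  apply: equitable_balanced.
  exact: (latin_square_equitable (h := Some) latin5_latin_square K_latin5).
have same_color : K (ord5 0, ord5 0) = K (ord5 1, ord5 1) by rewrite !K_latin5.
move=> /orbit_coloring_transitive /(_ same_color) [[f g] pres [f0 g0]].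
apply: (latin5_no_shift_symmetry (f := f) (g := g)) => // i j.
by have := pres (i, j); rewrite !K_latin5 => /Some_inj.
Qed.
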